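(* Let $A=C(X)$ be the commutative unital C*-algebra of continuous functions on a compact Hausdorff space $X$. For any finitely generated Hilbert $A$-module $\mathcal H$ and any standard normalized tight frame $\{y_j : j\in\mathbb J\}$ of $\mathcal H$, the sum $\sum_j\langle y_j,y_j\rangle$ (converging weakly, i.e. in the weak* topology of the bidual $A^{**}$) is a continuous function on $X$ taking constant non-negative integer values on closed-open subsets of $X$. This limit does not depend on the choice of the standard normalized tight frame of $\mathcal H$.
   Context: A (left) Hilbert $A$-module is a left $A$-module $\mathcal H$ with an $A$-valued inner product $\langle\cdot,\cdot\rangle$, $A$-linear in the first argument, with $\langle x,y\rangle=\langle y,x\rangle^*$, $\langle x,x\rangle\ge0$ and $=0$ only for $x=0$, complete in $\|x\|=\|\langle x,x\rangle\|^{1/2}$. It is finitely generated if every element is an $A$-linear combination of finitely many fixed elements. A sequence $\{y_j:j\in\mathbb J\}$ ($\mathbb J$ finite or countable) is a normalized tight frame if $\langle x,x\rangle=\sum_j\langle x,y_j\rangle\langle y_j,x\rangle$ for all $x\in\mathcal H$, and standard if this series converges in norm for every $x$. *)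

From HB Require Import structures.
From mathcomp Require Import all_boot all_order all_algebra.
From mathcomp Require Import complex.
From mathcomp Require Import all_classical all_reals topology.
Set Implicit Arguments. Unset Strict Implicit. Unset Printing Implicit Defensive.
Import Order.TTheory GRing.Theory Num.Theory.
Local Open Scope ring_scope.
Local Open Scope classical_set_scope.
Local Open Scope complex_scope.

Section Defs.
Variables (R : realType) (X : topologicalType).
Notation C := (R[i]).

(* f : X -> C is continuous (the elements of A = C(X) are the continuous f). *)
Definition cont (f : X -> C) : Prop :=
  forall (x : X) (e : C), 0 < e -> \forall y \near x, `|f y - f x| < e.

(* Left Hilbert C(X)-module structure on a Z-module H:
   act a h = a . h (only meaningful for continuous a), ip x y = <x,y> in C(X). *)
Record hilbert_CX_module (H : zmodType) (act : (X -> C) -> H -> H)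
    (ip : H -> H -> X -> C) : Prop := {
  hm_actD : forall a x y, cont a -> act a (x + y) = act a x + act a y;
  hm_actDl : forall a b x, cont a -> cont b ->
    act (fun t => a t + b t) x = act a x + act b x;
  hm_actM : forall a b x, cont a -> cont b ->
    act (fun t => a t * b t) x = act a (act b x);
  hm_act1 : forall x, act (fun _ => 1) x = x;
  hm_ip_cont : forall x y, cont (ip x y);
  hm_ipD : forall x y z t, ip (x + y) z t = ip x z t + ip y z t;
  hm_ipZ : forall a x z t, cont a -> ip (act a x) z t = a t * ip x z t;
  hm_ip_sym : forall x y t, ip x y t = (ip y x t)^*;
  hm_ip_ge0 : forall x t, 0 <= ip x x t;
  hm_ip_def : forall x, (forall t, ip x x t = 0) -> x = 0;
  (* completeness for the norm ||x|| = sup_t |<x,x>(t)|^(1/2) *)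
  hm_complete : forall u : nat -> H,
    (forall e : C, 0 < e -> exists N, forall m n, (N <= m)%N -> (N <= n)%N ->
       forall t, `|ip (u m - u n) (u m - u n) t| < e) ->
    exists l : H, forall e : C, 0 < e -> exists N, forall n, (N <= n)%N ->
       forall t, `|ip (u n - l) (u n - l) t| < e
}.

Definition fin_generated (H : zmodType) (act : (X -> C) -> H -> H) : Prop :=
  exists (n : nat) (g : 'I_n -> H), forall x : H,
    exists a : 'I_n -> X -> C, (forall i, cont (a i)) /\
      x = \sum_(i < n) act (a i) (g i).

(* standard normalized tight frame indexed by nat (a finite frame is padded
   with zeros): for every x, sum_j <x,y_j><y_j,x> converges in the norm of
   C(X) (sup norm) to <x,x>. *)
Definition std_nt_frame (H : zmodType) (ip : H -> H -> X -> C)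
    (y : nat -> H) : Prop :=
  forall x : H, forall e : C, 0 < e -> exists N, forall n, (N <= n)%N ->
    forall t, `|ip x x t - \sum_(j < n) ip x (y j) t * ip (y j) x t| < e.

Definition bdd_lin_functional (phi : (X -> C) -> C) : Prop :=
  (forall a f g, cont f -> cont g ->
     phi (fun t => a * f t + g t) = a * phi f + phi g) /\
  exists K : C, forall f, cont f -> forall M : C,
     (forall t, `|f t| <= M) -> `|phi f| <= K * M.

(* the series sum_j s_j (s_j in A) converges weakly [weak-star in the bidual of A] to f *)
Definition weak_sum_to (s : nat -> X -> C) (f : X -> C) : Prop :=
  forall phi, bdd_lin_functional phi ->
    forall e : C, 0 < e -> exists N, forall n, (N <= n)%N ->
      `|phi (fun t => \sum_(j < n) s j t) - phi f| < e.

End Defs.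

From HB Require Import structures.
From mathcomp Require Import all_boot all_order all_algebra.
From mathcomp Require Import complex.
From mathcomp Require Import all_classical all_reals topology normedtype.
From mathcomp Require Import ring lra.
Import Order.TTheory GRing.Theory Num.Theory numFieldNormedType.Exports.
Local Open Scope ring_scope.
Local Open Scope classical_set_scope.
Set Implicit Arguments. Unset Strict Implicit. Unset Printing Implicit Defensive.

(* The function is the fiber dimension d.  The fiber of H at t is H modulo
   the vectors x with <x,x>(t) = 0, with inner product <.,.>(t); Gram-Schmidt
   on the generators gives it a finite orthonormal basis, and Parseval's
   identity in the fiber turns the frame condition into: the partial sums of
   sum_j <y_j,y_j>(t) increase to d(t).  As a pointwise limit of increasing
   continuous functions, d is lower semicontinuous.  Upper semicontinuity is
   where completeness enters: if at points t_m -> t0 there were unit vectors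
   w_m orthogonal to a basis of the fiber at t0, disjointly supported bumps
   phi_m with phi_m(t_m) = 2^-m would make sum_m phi_m w_m converge to some l
   with <l,w_m>(t_m) = 2^-m, whereas near t0 the generators lie close to the
   span of that basis, which forces |<l,w_m>(t_m)| = O(4^-m).  So d is
   locally constant, and by Dini's theorem the partial sums converge to it
   uniformly, hence weakly. *)

Lemma gt0_realC (R : realType) (e : R[i]) : 0 < e -> exists2 r : R, 0 < r & e = r%:C%C.
Proof. by case: e => a b; rewrite ltcE /= => /andP [/eqP -> a0]; exists a. Qed.

Lemma normcR (R : realType) (r : R) : `|r%:C%C| = `|r|%:C%C.
Proof. by rewrite normc_def /= expr0n /= addr0 sqrtr_sqr. Qed.

Lemma nondecreasing_le_lim (R : realType) (u : nat -> R) (l : R) :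
    {homo u : n m / (n <= m)%N >-> n <= m} ->
    (forall e, 0 < e -> exists N, forall n, (N <= n)%N -> `|l - u n| < e) ->
  forall n, u n <= l.
Proof.
move=> u_incr u_cvg n; rewrite leNgt; apply/negP => lt_l.
have [|N uN] := u_cvg (u n - l); first by rewrite subr_gt0.
have := uN (maxn N n) (leq_maxl _ _); have := u_incr _ _ (leq_maxr N n).
by rewrite ltr_norml => ? /andP[? ?]; lra.
Qed.

Lemma fast_decreasing_seq (R : realType) (T : Type) (h : T -> R) (P : T -> Prop) (q : R) :
    0 < q -> (forall eps, 0 < eps -> exists2 x, P x & 0 < h x < eps) ->
  exists s : nat -> T, [/\ forall m, P (s m) /\ 0 < h (s m), h (s 0) < 1 &
                          forall m, h (s m.+1) < h (s m) * q].
Proof.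
move=> q0 small.
have /choice [pick pickP] : forall eps, exists x, 0 < eps -> P x /\ 0 < h x < eps.
  move=> eps; have [x Px _] := small _ ltr01.
  case: (pselect (0 < eps)) => [/small[y Py hy]|neps]; first by exists y.
  by exists x => /neps.
pose s := fix s m := if m is m'.+1 then pick (h (s m') * q) else pick 1.
have s_pos m : P (s m) /\ 0 < h (s m).
  elim: m => [|m [_ hm]]; first by have [Ps /andP[hs _]] := pickP 1 ltr01.
  by have [Ps /andP[hs _]] := pickP _ (mulr_gt0 hm q0).
exists s; split => //; first by have [_ /andP[_]] := pickP 1 ltr01.
by move=> m; have [_ /andP[_]] := pickP _ (mulr_gt0 (s_pos m).2 q0).
Qed.

Lemma geometric_quarter_le (R : realType) p k :
  \sum_(i < k) (4^-1 : R) ^+ (p + i) <= 4 / 3 * 4^-1 ^+ p.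
Proof.
have geo j : \sum_(i < j) (4^-1 : R) ^+ i = 4 / 3 * (1 - 4^-1 ^+ j).
  by elim: j => [|j IH]; rewrite ?big_ord0 ?expr0 ?subrr ?mulr0 // big_ord_recr /= IH exprSr; field.
under eq_bigr => i _ do rewrite exprD.
rewrite -mulr_sumr geo mulrCA ler_pM2l ?divr_gt0 // ger_pMr ?exprn_gt0 ?invr_gt0 //.
by rewrite lerBlDr lerDl exprn_ge0 // invr_ge0.
Qed.

Section Continuity.
Variables (R : realType) (X : topologicalType).
Local Notation C := (R[i]).

Lemma cont_cst (c : C) : cont (fun _ : X => c).
Proof. by move=> x e e0; near=> y; rewrite subrr normr0. Unshelve. all: by end_near. Qed.

Lemma contD (f g : X -> C) : cont f -> cont g -> cont (fun t => f t + g t).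
Proof.
move=> cf cg x e e0; have e2 : 0 < e / 2 by rewrite divr_gt0.
near=> y; rewrite opprD addrACA.
have lt_f : `|f y - f x| < e / 2 by near: y; exact: cf.
have lt_g : `|g y - g x| < e / 2 by near: y; exact: cg.
by rewrite (le_lt_trans (ler_normD _ _)) // [e]splitr ltrD.
Unshelve. all: by end_near. Qed.

Lemma contN (f : X -> C) : cont f -> cont (fun t => - f t).
Proof. by move=> cf x e e0; apply: filterS (cf x e e0) => y; rewrite -opprD normrN. Qed.

Lemma cont_sum (I : Type) (r : seq I) (P : pred I) (F : I -> X -> C) :
  (forall i, cont (F i)) -> cont (fun t => \sum_(i <- r | P i) F i t).
Proof.
move=> cF; elim: r => [|i r IH].
  by under eq_fun do rewrite big_nil; exact: cont_cst.
under eq_fun do rewrite big_cons.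
by case: (P i) => //; apply: contD.
Qed.

Lemma cont_Re (f : X -> C) : cont f -> continuous (fun t => complex.Re (f t)).
Proof.
move=> cf x; apply/cvgrPdist_lt => e e0; near=> y.
rewrite -raddfB -ltcR; apply: le_lt_trans (normc_ge_Re _) _.
rewrite distrC; near: y; apply: cf; by rewrite ltcR.
Unshelve. all: by end_near. Qed.

Lemma cont_real_complex (u : X -> R) : continuous u -> cont (fun t => (u t)%:C%C).
Proof.
move=> cu x _ /gt0_realC [e e0 ->].
have /cvgrPdist_lt /(_ _ e0) := cu x; apply: filterS => y.
by rewrite -raddfB /= distrC normcR ltcR.
Qed.

Lemma cont_near_cst (f : X -> C) : (forall x, \forall t \near x, f t = f x) -> cont f.
Proof. by move=> f_lc x e e0; apply: filterS (f_lc x) => t ->; rewrite subrr normr0. Qed.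

Hypothesis X_compact : compact [set: X].

Lemma cont_bounded (a : X -> C) : cont a -> exists B : R, forall t, `|a t| <= B%:C%C.
Proof.
move=> ca; have [x _|N _ aN] := (compact_near_coveringP [set: X]).1 X_compact
  nat \oo (fun N t => `|a t| < (N%:R : R)%:C%C); last first.
  by exists N%:R => t; exact/ltW/(aN N (leqnn N) t I).
have ax_real : `|a x| \is Num.real by rewrite ger0_real.
exists ([set t | `|a t - a x| < 1], [set N : nat | complex.Re `|a x| + 1 <= N%:R]).
  by split; [apply: ca; rewrite ltr01 | exact: nbhs_infty_ger].
move=> [t N] [/= near_x N_ge]; rewrite -(subrK (a x) (a t)).
apply: le_lt_trans (ler_normD _ _) _; rewrite -(RRe_real ax_real).
rewrite -(subrK (complex.Re `|a x|) N%:R) raddfD /= ltrD2r.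
by apply: lt_le_trans near_x _; rewrite -(rmorph1 (real_complex R)) lecR lerBrDr addrC.
Qed.

Lemma dini_uniform (s : nat -> X -> R) (f : X -> R) :
    (forall n, continuous (s n)) -> continuous f ->
    (forall n m t, (n <= m)%N -> s n t <= s m t) ->
    (forall n t, s n t <= f t) ->
    (forall t e, 0 < e -> exists N, f t - s N t < e) ->
  forall e, 0 < e -> exists N, forall n, (N <= n)%N -> forall t, f t - s n t < e.
Proof.
move=> cs cf s_incr s_le s_cvg e e0; have e3 : 0 < e / 3 by rewrite divr_gt0.
have [x _|N _ sN] := (compact_near_coveringP [set: X]).1 X_compact
  nat \oo (fun n t => f t - s n t < e); last by exists N => n Nn t; exact: sN.
have [Nx sNx] := s_cvg x _ e3.
exists ([set t | `|f x - f t| < e / 3 /\ `|s Nx x - s Nx t| < e / 3],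
        [set n : nat | (Nx <= n)%N]); last first.
  move=> [t n] [/= [ft st] Nn]; have := s_incr _ _ t Nn.
  by move: ft st; rewrite !ltr_norml; lra.
split; last exact: nbhs_infty_ge.
have /cvgrPdist_lt/(_ _ e3) f_near := cf x.
have /cvgrPdist_lt/(_ _ e3) s_near := cs Nx x.
by apply: filterS2 f_near s_near.
Qed.

End Continuity.

Section LocallyConstant.
Variables (X : topologicalType) (T : Type) (f : X -> T).
Hypothesis f_lc : forall x, \forall t \near x, f t = f x.

Lemma open_level_set (c : T) : open [set t | f t = c].
Proof. by rewrite openE => x /= fx; apply: filterS (f_lc x) => t; rewrite fx. Qed.

Lemma closed_level_set (c : T) : closed [set t | f t = c].
Proof.
rewrite -openC openE => x /= fx; apply: filterS (f_lc x) => t ft.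
by rewrite /setC /= ft.
Qed.

End LocallyConstant.

Lemma weak_sum_of_uniform (R : realType) (X : topologicalType) (s : nat -> X -> R[i])
    (f : X -> R[i]) : (forall j, cont (s j)) -> cont f ->
    (forall e : R, 0 < e -> exists N, forall n, (N <= n)%N ->
       forall t, `|\sum_(j < n) s j t - f t| <= e%:C%C) ->
  weak_sum_to s f.
Proof.
move=> s_cont f_cont s_unif phi [phi_lin [K phi_bd]] _ /gt0_realC[E E0 ->].
pose k := complex.Re `|K|; have kK : k%:C%C = `|K| by exact/RRe_real/ger0_real.
have k0 : 0 <= k by rewrite -ler0c kK.
have dlt0 : 0 < E / (k + 1) by rewrite divr_gt0 // ltr_wpDl.
have [N unif] := s_unif _ dlt0; exists N => n Nn.
pose S t := \sum_(j < n) s j t.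
have S_cont : cont S by exact: cont_sum.
have h_cont : cont (fun t => -1 * f t + S t).
  by under eq_fun do rewrite mulN1r; exact: contD (contN f_cont) S_cont.
have -> : phi S - phi f = phi (fun t => -1 * f t + S t) by rewrite phi_lin // mulN1r addrC.
have bnd t : `|-1 * f t + S t| <= (E / (k + 1))%:C%C.
  by rewrite mulN1r addrC; exact: unif.
have le_B := phi_bd _ h_cont _ bnd; have B0 := le_trans (normr_ge0 _) le_B.
apply: le_lt_trans le_B _.
rewrite -(ger0_norm B0) normrM -kK !normcR !ger0_norm ?ltW // -rmorphM ltcR.
by rewrite mulrA ltr_pdivrMr ?ltr_wpDl // mulrC ltr_pM2l // ltrDl ltr01.
Qed.

(** * Fibers of a Hilbert C(X)-module *)

Section HilbertModule.
Variables (R : realType) (X : topologicalType).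
Local Notation C := (R[i]).
Variables (H : zmodType) (act : (X -> C) -> H -> H) (ip : H -> H -> X -> C).
Hypothesis HH : hilbert_CX_module act ip.

Definition scale (c : C) (x : H) : H := act (fun _ => c) x.

Lemma ip_conj x y t : ip x y t = (ip y x t)^*.
Proof. by rewrite {1}(hm_ip_sym HH). Qed.

Lemma ipDl x y z t : ip (x + y) z t = ip x z t + ip y z t.
Proof. by rewrite (hm_ipD HH). Qed.

Lemma ipDr x y z t : ip z (x + y) t = ip z x t + ip z y t.
Proof. by rewrite ip_conj ipDl rmorphD /= -!ip_conj. Qed.

Lemma ip0l z t : ip 0 z t = 0.
Proof. by apply: (addrI (ip 0 z t)); rewrite -ipDl !addr0. Qed.

Lemma ip0r z t : ip z 0 t = 0.
Proof. by rewrite ip_conj ip0l conjC0. Qed.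

Lemma ipNl x z t : ip (- x) z t = - ip x z t.
Proof. by apply/eqP; rewrite -subr_eq0 opprK -ipDl addNr ip0l. Qed.

Lemma ipNr x z t : ip z (- x) t = - ip z x t.
Proof. by rewrite ip_conj ipNl rmorphN /= -ip_conj. Qed.

Lemma ipBl x y z t : ip (x - y) z t = ip x z t - ip y z t.
Proof. by rewrite ipDl ipNl. Qed.

Lemma ipBr x y z t : ip z (x - y) t = ip z x t - ip z y t.
Proof. by rewrite ipDr ipNr. Qed.

Lemma ip_actl a x z t : cont a -> ip (act a x) z t = a t * ip x z t.
Proof. by move=> ca; rewrite (hm_ipZ HH). Qed.

Lemma ip_actr a x z t : cont a -> ip z (act a x) t = (a t)^* * ip z x t.
Proof. by move=> ca; rewrite ip_conj ip_actl // rmorphM /= -ip_conj. Qed.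

Lemma ipZl c x z t : ip (scale c x) z t = c * ip x z t.
Proof. exact/ip_actl/cont_cst. Qed.

Lemma ipZr c x z t : ip z (scale c x) t = c^* * ip z x t.
Proof. exact/ip_actr/cont_cst. Qed.

Lemma ip_suml I (r : seq I) (P : pred I) (F : I -> H) z t :
  ip (\sum_(i <- r | P i) F i) z t = \sum_(i <- r | P i) ip (F i) z t.
Proof. by elim/big_rec2: _ => [|i y1 y2 _ <-]; rewrite ?ip0l ?ipDl. Qed.

Lemma ip_sumr I (r : seq I) (P : pred I) (F : I -> H) z t :
  ip z (\sum_(i <- r | P i) F i) t = \sum_(i <- r | P i) ip z (F i) t.
Proof. by elim/big_rec2: _ => [|i y1 y2 _ <-]; rewrite ?ip0r ?ipDr. Qed.

Lemma ip_ge0 x t : 0 <= ip x x t.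
Proof. by have := hm_ip_ge0 HH x t. Qed.

Lemma ip_cauchy_schwarz x y t : `|ip x y t| ^+ 2 <= ip x x t * ip y y t.
Proof.
have expand l : ip (x - scale l y) (x - scale l y) t =
    ip x x t - l^* * ip x y t - l * (ip x y t)^* + l * l^* * ip y y t.
  rewrite ipBl !ipBr ipZl !ipZr ipZl -(ip_conj y x); ring.
set a := ip x x t; set b := ip x y t; set c := ip y y t.
have nb : `|b| ^+ 2 = b * b^* by rewrite normCK.
have [c0|c_neq0] := eqVneq c 0.
  (* when [c = 0], [<x - s b y, x - s b y>(t) = a - 2 s |b|^2] for real [s],
     which is negative once [s |b|^2 = a + 1] *)
  rewrite c0 mulr0; have [->//|b_neq0] := eqVneq (`|b| ^+ 2) 0.
  have bp : 0 < `|b| ^+ 2 by rewrite lt0r b_neq0 exprn_ge0.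
  pose s := (a + 1) / `|b| ^+ 2.
  have sR : s^* = s by apply/geC0_conj/divr_ge0; rewrite ?addr_ge0 ?ip_ge0 ?exprn_ge0.
  have := ip_ge0 (x - scale (s * b) y) t.
  rewrite expand -/a -/b -/c c0 mulr0 addr0 rmorphM /= sR.
  have -> : a - s * b^* * b - s * b * b^* = a - 2 * (s * `|b| ^+ 2) by rewrite nb; ring.
  have a2 : 0 < a + 2 by rewrite ltr_wpDl ?ip_ge0.
  rewrite divfK // (_ : a - 2 * (a + 1) = - (a + 2)); last by ring.
  by rewrite oppr_ge0 (lt_geF a2).
have cp : 0 < c by rewrite lt0r c_neq0 ip_ge0.
have cVR : (c^-1)^* = c^-1 by apply: geC0_conj; rewrite invr_ge0 ltW.
have := ip_ge0 (x - scale (b / c) y) t; rewrite expand -/a -/b -/c rmorphM /= cVR.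
have -> : a - b^* / c * b - b / c * b^* + b / c * (b^* / c) * c = a - (b * b^*) / c by field.
by rewrite -nb subr_ge0 ler_pdivrMr // mulrC.
Qed.

Lemma ip_eq0l x y t : ip x x t = 0 -> ip x y t = 0.
Proof.
move=> x0; have := ip_cauchy_schwarz x y t; rewrite x0 mul0r => le0.
by apply/eqP; rewrite -normr_eq0 -sqrf_eq0 eq_le le0 exprn_ge0.
Qed.

Lemma ip_eq0r x y t : ip x x t = 0 -> ip y x t = 0.
Proof. by move=> x0; rewrite ip_conj ip_eq0l // conjC0. Qed.

Definition sqnorm (x : H) (t : X) : R := complex.Re (ip x x t).

Lemma sqnormE x t : (sqnorm x t)%:C%C = ip x x t.
Proof. exact/RRe_real/ger0_real/ip_ge0. Qed.

Lemma sqnorm_ge0 x t : 0 <= sqnorm x t.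
Proof. by rewrite -lecR sqnormE ip_ge0. Qed.

Lemma sqnorm_continuous x : continuous (sqnorm x).
Proof. exact/cont_Re/(hm_ip_cont HH). Qed.

Lemma sum_sqnorm_continuous I (s : seq I) (P : pred I) (F : I -> H) :
  continuous (fun t => \sum_(i <- s | P i) sqnorm (F i) t).
Proof.
suff -> : (fun t => \sum_(i <- s | P i) sqnorm (F i) t) =
          (fun t => complex.Re (\sum_(i <- s | P i) ip (F i) (F i) t)).
  by apply/cont_Re/cont_sum => i; exact/(hm_ip_cont HH).
apply: funext => t; rewrite -[LHS]/(complex.Re (_ %:C)%C) rmorph_sum /=.
by congr complex.Re; apply: eq_bigr => i _; rewrite sqnormE.
Qed.

Definition proj_at t d (u : nat -> H) x := \sum_(a < d) scale (ip x (u a) t) (u a).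

(* A family is total at [t] when it spans the fiber at [t], i.e. when only
   vectors that are null at [t] are orthogonal to it there. *)
Section Fiber.
Variable t : X.

Definition orthonormal_at d (u : nat -> H) :=
  forall a b, (a < d)%N -> (b < d)%N -> ip (u a) (u b) t = (a == b)%:R.

Definition orthogonal_at d (u : nat -> H) w := forall a, (a < d)%N -> ip w (u a) t = 0.

Definition total_at d (u : nat -> H) := forall w, orthogonal_at d u w -> ip w w t = 0.

Lemma ip_orthonormal_comb d u (c c' : 'I_d -> C) : orthonormal_at d u ->
  ip (\sum_(a < d) scale (c a) (u a)) (\sum_(b < d) scale (c' b) (u b)) t =
  \sum_(a < d) c a * (c' a)^*.
Proof.
move=> on; rewrite ip_suml; apply: eq_bigr => a _; rewrite ipZl ip_sumr.
rewrite (bigD1 a) //= ipZr on // eqxx mulr1 big1 ?addr0 ?[_ * c a]mulrC // => b ba.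
by rewrite ipZr on // eq_sym [_ == _](negbTE ba) mulr0.
Qed.

Lemma ip_proj_orthogonal s d u w x : orthogonal_at d u w -> ip w (proj_at s d u x) t = 0.
Proof. by move=> ow; rewrite ip_sumr big1 // => a _; rewrite ipZr ow // mulr0. Qed.

Lemma orthogonal_residual d u x : orthonormal_at d u -> orthogonal_at d u (x - proj_at t d u x).
Proof.
move=> on b bd; rewrite ipBl ip_suml (bigD1 (Ordinal bd)) //= ipZl on // eqxx mulr1.
by rewrite big1 ?addr0 ?subrr // => a ab; rewrite ipZl on // [_ == _](negbTE ab) mulr0.
Qed.

Lemma total_residual d u x : orthonormal_at d u -> total_at d u ->
  ip (x - proj_at t d u x) (x - proj_at t d u x) t = 0.
Proof. by move=> on tot; apply/tot/orthogonal_residual. Qed.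

Lemma parseval d u x : orthonormal_at d u -> total_at d u ->
  ip x x t = \sum_(a < d) ip x (u a) t * ip (u a) x t.
Proof.
move=> on tot; have := ip_eq0l x (total_residual x on tot).
rewrite ipBl => /eqP; rewrite subr_eq0 => /eqP ->.
by rewrite ip_suml; apply: eq_bigr => a _; rewrite ipZl.
Qed.

Definition normalize w := scale (sqrtC (ip w w t))^-1 w.

Lemma ip_normalize w : ip w w t != 0 -> ip (normalize w) (normalize w) t = 1.
Proof.
move=> w0; have sR : ((sqrtC (ip w w t))^-1)^* = (sqrtC (ip w w t))^-1.
  by apply: geC0_conj; rewrite invr_ge0 sqrtC_ge0 ip_ge0.
by rewrite ipZl ipZr sR mulrA -expr2 exprVn sqrtCK mulVf.
Qed.

Lemma orthogonal_normalize d u w : orthogonal_at d u w -> orthogonal_at d u (normalize w).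
Proof. by move=> ow a ad; rewrite ipZl ow // mulr0. Qed.

Lemma orthonormal_extend d u w : orthonormal_at d u -> orthogonal_at d u w -> ip w w t != 0 ->
  orthonormal_at d.+1 (fun a => if a == d then normalize w else u a).
Proof.
move=> on ow w0 a b; have ow' := orthogonal_normalize ow.
rewrite !ltnS [(a <= d)%N]leq_eqVlt [(b <= d)%N]leq_eqVlt => /predU1P[->|ad] /predU1P[->|bd].
- by rewrite eqxx ip_normalize.
- by rewrite eqxx (ltn_eqF bd) ow' // eq_sym (ltn_eqF bd).
- by rewrite eqxx (ltn_eqF ad) ip_conj ow' // conjC0.
- by rewrite (ltn_eqF ad) (ltn_eqF bd) on.
Qed.

Lemma orthonormal_size_le d u r e : orthonormal_at d u -> total_at r e -> (d <= r)%N.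
Proof.
move=> on tot; rewrite leqNgt; apply/negP => rd.
pose M : 'M[C]_(d, r) := \matrix_(a, i) ip (u a) (e i) t.
have /rowV0Pn [c /sub_kermxP cM c0] : kermx M != 0.
  by rewrite -mxrank_eq0 mxrank_ker subn_eq0 -ltnNge (leq_ltn_trans (rank_leq_col M)).
pose w := \sum_(a < d) scale (c 0 a) (u a).
have ow : orthogonal_at r e w.
  move=> i ir; have /matrixP/(_ 0 (Ordinal ir)) := cM; rewrite !mxE => <-.
  rewrite ip_suml; apply: eq_bigr => a _; by rewrite ipZl mxE.
move/eqP: c0; apply; apply/matrixP => i a; rewrite ord1 mxE.
have /eqP := tot w ow; rewrite ip_orthonormal_comb // psumr_eq0 => [/allP/(_ a)|b _].
  by rewrite mem_index_enum -normCK sqrf_eq0 normr_eq0 => /(_ isT)/eqP.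
by rewrite -normCK exprn_ge0.
Qed.

End Fiber.

Section Generators.
Variables (n : nat) (g : 'I_n -> H).
Hypothesis g_span : forall x, exists a : 'I_n -> X -> C,
  (forall i, cont (a i)) /\ x = \sum_(i < n) act (a i) (g i).

Lemma null_of_orthogonal_gens w t : (forall k, ip w (g k) t = 0) -> ip w w t = 0.
Proof.
move=> wg; have [a [ca aw]] := g_span w; rewrite {2}aw.
by rewrite ip_sumr big1 // => k _; rewrite ip_actr // wg mulr0.
Qed.

Lemma gram_schmidt t m : (m <= n)%N -> exists d u, orthonormal_at t d u /\
  forall w, orthogonal_at t d u w -> forall k : 'I_n, (k < m)%N -> ip w (g k) t = 0.
Proof.
elim: m => [_|m IH lt_mn]; first by exists 0%N, (fun=> 0); split=> // a b.
have [d [u [on gs]]] := IH (ltnW lt_mn); set gm := g (Ordinal lt_mn).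
set r := gm - proj_at t d u gm; have ow_r : orthogonal_at t d u r by apply: orthogonal_residual.
have ip_gm w : orthogonal_at t d u w -> ip w gm t = ip w r t.
  by move=> ow; rewrite ipBr ip_proj_orthogonal // subr0.
have split_k (k : 'I_n) : (k < m.+1)%N -> (k < m)%N \/ k = Ordinal lt_mn.
  by rewrite ltnS leq_eqVlt => /predU1P[km|]; [right; exact: val_inj | left].
have [r0|r_neq0] := eqVneq (ip r r t) 0.
  exists d, u; split=> // w ow k /split_k[|->]; first exact: (gs w ow k).
  by rewrite ip_gm // ip_eq0r.
pose u' a := if a == d then normalize t r else u a.
have ow_u w : orthogonal_at t d.+1 u' w -> orthogonal_at t d u w.
  by move=> ow a ad; have := ow a (ltnW ad); rewrite /u' (ltn_eqF ad).
exists d.+1, u'; split; first exact: orthonormal_extend.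
move=> w ow k /split_k[|->]; first exact: (gs w (ow_u w ow) k).
rewrite (ip_gm w (ow_u w ow)); have /eqP := ow d (ltnSn d).
rewrite /u' eqxx ipZr mulf_eq0 conjC_eq0 invr_eq0 sqrtC_eq0 (negbTE r_neq0).
by move/eqP.
Qed.

Lemma exists_fiber_onb t : exists d u, orthonormal_at t d u /\ total_at t d u.
Proof.
have [d [u [on gs]]] := gram_schmidt t (leqnn n).
by exists d, u; split=> // w ow; apply: null_of_orthogonal_gens => k; exact: gs.
Qed.

End Generators.

End HilbertModule.

(** * Frames *)

Section Frames.
Variables (R : realType) (X : topologicalType).
Local Notation C := (R[i]).
Variables (H : zmodType) (act : (X -> C) -> H -> H) (ip : H -> H -> X -> C).
Hypothesis HH : hilbert_CX_module act ip.
Variable y : nat -> H.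

Definition frame_sum n t : R := \sum_(j < n) sqnorm ip (y j) t.

Lemma frame_sumE n t : (frame_sum n t)%:C%C = \sum_(j < n) ip (y j) (y j) t.
Proof. by rewrite rmorph_sum /=; apply: eq_bigr => j _; rewrite (sqnormE HH). Qed.

Lemma frame_sum_continuous n : continuous (frame_sum n).
Proof. exact: (sum_sqnorm_continuous HH). Qed.

Lemma frame_sum_nondecreasing t : {homo frame_sum ^~ t : n m / (n <= m)%N >-> n <= m}.
Proof.
move=> n m; elim: m => [|m IH]; first by rewrite leqn0 => /eqP ->.
rewrite leq_eqVlt ltnS => /predU1P[-> //|/IH le_nm]; apply: (le_trans le_nm).
by rewrite /frame_sum big_ord_recr lerDl (sqnorm_ge0 HH).
Qed.

Hypothesis y_frame : std_nt_frame ip y.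

Section AtPoint.
Variables (t : X) (d : nat) (u : nat -> H).
Hypotheses (u_on : orthonormal_at ip t d u) (u_total : total_at ip t d u).

Lemma frame_sum_parseval n : (frame_sum n t)%:C%C =
  \sum_(a < d) \sum_(j < n) ip (u a) (y j) t * ip (y j) (u a) t.
Proof.
rewrite frame_sumE exchange_big; apply: eq_bigr => j _.
by rewrite (parseval HH _ u_on u_total); apply: eq_bigr => a _; rewrite mulrC.
Qed.

Lemma frame_sum_cvg e : 0 < e -> exists N, forall n, (N <= n)%N -> `|d%:R - frame_sum n t| < e.
Proof.
move=> e0; pose e' := e / (d%:R + 1); have e'0 : 0 < e'%:C%C by rewrite ltcR divr_gt0 ?ltr_wpDl.
have /choice [N uN] : forall a : 'I_d, exists N, forall n, (N <= n)%N -> forall t,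
    `|ip (u a) (u a) t - \sum_(j < n) ip (u a) (y j) t * ip (y j) (u a) t| < e'%:C%C.
  by move=> a; apply: y_frame.
exists (\max_(a < d) N a)%N => n Nn; rewrite -ltcR -normcR rmorphB /= rmorph_nat.
have -> : d%:R = \sum_(a < d) ip (u a) (u a) t :> C.
  rewrite (eq_bigr (fun=> 1)) ?sumr_const ?card_ord // => a _.
  by rewrite u_on ?eqxx.
rewrite frame_sum_parseval -sumrB; apply: le_lt_trans (ler_norm_sum _ _ _) _.
apply: (@le_lt_trans _ _ (\sum_(a < d) e'%:C%C)).
  by apply: ler_sum => a _; apply/ltW/uN/(leq_trans (leq_bigmax a) Nn).
rewrite -rmorph_sum sumr_const card_ord ltcR -mulr_natr mulrAC ltr_pdivrMr ?ltr_wpDl //.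
by rewrite mulrDr mulr1 ltrDl.
Qed.

Lemma frame_sum_le n : frame_sum n t <= d%:R.
Proof.
by apply: (nondecreasing_le_lim (frame_sum_nondecreasing t)) => e; apply: frame_sum_cvg.
Qed.

End AtPoint.
End Frames.

(** * Upper semicontinuity of the fiber dimension *)

Section UpperSemicontinuity.
Variables (R : realType) (X : topologicalType).
Local Notation C := (R[i]).
Variables (H : zmodType) (act : (X -> C) -> H -> H) (ip : H -> H -> X -> C).
Hypothesis HH : hilbert_CX_module act ip.
Hypothesis X_compact : compact [set: X].
Variables (n : nat) (g : 'I_n -> H).
Hypothesis g_span : forall x, exists a : 'I_n -> X -> C,
  (forall i, cont (a i)) /\ x = \sum_(i < n) act (a i) (g i).
Variables (t0 : X) (r : nat) (e : nat -> H).
Hypotheses (e_on : orthonormal_at ip t0 r e) (e_total : total_at ip t0 r e).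

Definition gen_residual k := g k - proj_at act ip t0 r e (g k).

(* [defect t] measures how far the generators are, in the fiber at [t], from
   the span of the basis [e] of the fiber at [t0]. *)
Definition defect t : R := \sum_(k < n) sqnorm ip (gen_residual k) t.

Lemma defect_ge0 t : 0 <= defect t.
Proof. by apply: sumr_ge0 => k _; apply: (sqnorm_ge0 HH). Qed.

Lemma sqnorm_gen_residual_le k t : sqnorm ip (gen_residual k) t <= defect t.
Proof.
by rewrite /defect (bigD1 k) //= lerDl sumr_ge0 // => j _; apply: (sqnorm_ge0 HH).
Qed.

Lemma defect_t0 : defect t0 = 0.
Proof. by rewrite /defect big1 // => k _; rewrite /sqnorm (total_residual HH). Qed.

Lemma defect_continuous : continuous defect.
Proof. exact: (sum_sqnorm_continuous HH). Qed.

Lemma ip_gen_residual t w k : orthogonal_at ip t r e w -> ip w (g k) t = ip w (gen_residual k) t.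
Proof. by move=> ow; rewrite (ipBr HH) (ip_proj_orthogonal HH) // subr0. Qed.

Lemma total_of_defect0 t : defect t = 0 -> total_at ip t r e.
Proof.
move=> d0 w ow; apply: (null_of_orthogonal_gens HH g_span) => k.
rewrite ip_gen_residual //; apply: (ip_eq0r HH).
have sq0 : sqnorm ip (gen_residual k) t = 0.
  by apply/le_anti; rewrite (sqnorm_ge0 HH) andbT -d0 sqnorm_gen_residual_le.
by rewrite -(sqnormE HH) sq0.
Qed.

Section BadSequence.
Variables (t_ : nat -> X) (w_ : nat -> H).
Hypotheses (defect_pos : forall m, 0 < defect (t_ m)) (defect_lt1 : defect (t_ 0) < 1)
  (defect_fast : forall m, defect (t_ m.+1) < defect (t_ m) / 16)
  (w_orth : forall m, orthogonal_at ip (t_ m) r e (w_ m))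
  (w_unit : forall m, ip (w_ m) (w_ m) (t_ m) = 1).
Local Notation rho m := (defect (t_ m)).

Lemma defect_seq_le m : rho m <= 16^-1 ^+ m.
Proof.
elim: m => [|m IH]; first by rewrite expr0 ltW.
by rewrite exprSr (le_trans (ltW (defect_fast m))) // ler_pM2r ?invr_gt0.
Qed.

Lemma defect_seq_decr m p : (m < p)%N -> rho p < rho m / 16.
Proof.
elim: p => [//|p IH]; rewrite ltnS leq_eqVlt => /predU1P[<-|/IH lt_p]; first exact: defect_fast.
by have := defect_fast p; have := defect_pos p; lra.
Qed.

(* [bump m] is supported where [defect] is within a factor 2 of [rho m], so
   bumps of different indices are disjoint as [rho] drops by 16 at each step,
   and where [|w_ m|^2 < 2], so that [bump_vec m] has norm O(2^-m). *)
Definition bump m s : R := 2^-1 ^+ m *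
  Num.min (Num.max 0 (1 - 2 * `|defect s - rho m| / rho m)) (Num.max 0 (2 - sqnorm ip (w_ m) s)).

Lemma bump_ge0 m s : 0 <= bump m s.
Proof. by rewrite mulr_ge0 ?exprn_ge0 ?invr_ge0 // le_min !le_max !lexx. Qed.

Lemma bump_le m s : bump m s <= 2^-1 ^+ m.
Proof.
rewrite ger_pMr ?exprn_gt0 ?invr_gt0 // ge_min ge_max ler01 /=; apply/orP; left.
by rewrite lerBlDr lerDl divr_ge0 ?mulr_ge0 ?ler0n ?normr_ge0 ?ltW ?defect_pos.
Qed.

Lemma bump_at m : bump m (t_ m) = 2^-1 ^+ m.
Proof.
have v1 : sqnorm ip (w_ m) (t_ m) = 1 by rewrite /sqnorm w_unit.
rewrite /bump v1.
by rewrite subrr normr0 mulr0 mul0r subr0 (_ : 2 - 1 = 1 :> R) ?minxx ?max_r ?mulr1 //; lra.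
Qed.

Lemma bump_support m s : 0 < bump m s ->
  `|defect s - rho m| < rho m / 2 /\ sqnorm ip (w_ m) s < 2.
Proof.
rewrite pmulr_rgt0 ?exprn_gt0 ?invr_gt0 // lt_min !lt_max ltxx /= !subr_gt0.
case/andP=> near_rho ->; split=> //; have rm := defect_pos m.
by move: near_rho; rewrite ltr_pdivrMr // mul1r; lra.
Qed.

Lemma bump_disjoint m p s : m != p -> bump m s * bump p s = 0.
Proof.
wlog lt_mp : m p / (m < p)%N.
  by move=> W; rewrite neq_ltn => /orP[] lt; [|rewrite mulrC]; apply: W; rewrite ?ltn_eqF.
move=> _; have [bm|bm] := eqVneq (bump m s) 0; first by rewrite bm mul0r.
have [bp|bp] := eqVneq (bump p s) 0; first by rewrite bp mulr0.
have /bump_support[near_m _] : 0 < bump m s by rewrite lt0r bm bump_ge0.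
have /bump_support[near_p _] : 0 < bump p s by rewrite lt0r bp bump_ge0.
have := defect_seq_decr lt_mp; have := defect_pos p.
by move: near_m near_p; rewrite !ltr_norml => /andP[? ?] /andP[? ?]; lra.
Qed.

Lemma bump_continuous m : continuous (bump m).
Proof.
have tent : continuous (fun s => 1 - 2 * `|defect s - rho m| / rho m).
  move=> s; apply: cvgB; first exact: cvg_cst.
  apply: cvgM; last exact: cvg_cst; apply: cvgM; first exact: cvg_cst.
  by apply: cvg_norm; apply: cvgB; [exact: defect_continuous | exact: cvg_cst].
have cap : continuous (fun s => 2 - sqnorm ip (w_ m) s).
  by move=> s; apply: cvgB; [exact: cvg_cst | exact: (sqnorm_continuous HH)].
have zero : continuous (fun _ : X => 0 : R) by move=> ?; exact: cvg_cst.
move=> s; apply: cvgM; first exact: cvg_cst.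
exact: (min_fun_continuous (max_fun_continuous zero tent) (max_fun_continuous zero cap)).
Qed.

Lemma bump_cont m : cont (fun s => (bump m s)%:C%C).
Proof. exact/cont_real_complex/bump_continuous. Qed.

Definition bump_vec m := act (fun s => (bump m s)%:C%C) (w_ m).

Definition bump_sum q := \sum_(m < q) bump_vec m.

Lemma ip_bump_vec m p s :
  ip (bump_vec m) (bump_vec p) s = (bump m s * bump p s)%:C%C * ip (w_ m) (w_ p) s.
Proof.
rewrite (ip_actl HH _ _ _ (bump_cont m)) (ip_actr HH _ _ _ (bump_cont p)).
by rewrite geC0_conj ?ler0c ?bump_ge0 // mulrA [in RHS]rmorphM.
Qed.

Lemma bump_sum_block p k : bump_sum (p + k) - bump_sum p = \sum_(i < k) bump_vec (p + i).
Proof. by rewrite /bump_sum big_split_ord /= addrAC subrr add0r. Qed.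

Lemma ip_bump_block p k s :
  ip (\sum_(i < k) bump_vec (p + i)) (\sum_(i < k) bump_vec (p + i)) s =
  (\sum_(i < k) bump (p + i) s ^+ 2 * sqnorm ip (w_ (p + i)) s)%:C%C.
Proof.
rewrite (ip_suml HH) rmorph_sum /=; apply: eq_bigr => i _.
rewrite (ip_sumr HH) (bigD1 i) //= big1 ?addr0 => [|j ji].
  by rewrite ip_bump_vec -(sqnormE HH) -rmorphM expr2.
by rewrite ip_bump_vec bump_disjoint ?mul0r // eqn_add2l; apply: contraNneq ji => /ord_inj ->.
Qed.

Lemma bump_sq_le m s : bump m s ^+ 2 * sqnorm ip (w_ m) s <= 2 * 4^-1 ^+ m.
Proof.
have [->|bm] := eqVneq (bump m s) 0.
  by rewrite expr0n mul0r mulr_ge0 ?exprn_ge0 ?invr_ge0.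
have /bump_support[_ v2] : 0 < bump m s by rewrite lt0r bm bump_ge0.
have -> : (4^-1 : R) ^+ m = 2^-1 ^+ m * 2^-1 ^+ m by rewrite -exprMn -invfM -natrM.
rewrite mulrC expr2; apply: ler_pM.
- exact: (sqnorm_ge0 HH).
- exact: mulr_ge0 (bump_ge0 m s) (bump_ge0 m s).
- exact: ltW.
- exact: ler_pM (bump_ge0 m s) (bump_ge0 m s) (bump_le m s) (bump_le m s).
Qed.

Lemma bump_sum_cauchy (eps : C) : 0 < eps -> exists N, forall m q, (N <= m)%N -> (N <= q)%N ->
  forall s, `|ip (bump_sum m - bump_sum q) (bump_sum m - bump_sum q) s| < eps.
Proof.
move=> /gt0_realC[E E0 ->].
have [N N_small] : exists N, 3 * (4^-1 : R) ^+ N < E.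
  exists (Num.Def.archi_bound (3 / E)); rewrite exprVn ltr_pdivrMr ?exprn_gt0 //.
  rewrite -ltr_pdivrMl // mulrC (lt_trans (archi_boundP _)) ?divr_ge0 ?ltW //.
  by rewrite -natrX ltr_nat ltn_expl.
exists N => m q; wlog le_qm : m q / (q <= m)%N.
  move=> W Nm Nq s; have [/W/(_ Nm Nq s)//|/ltnW/W/(_ Nq Nm s)] := leqP q m.
  by rewrite -opprB (ipNl HH) (ipNr HH) opprK.
move=> _ Nq s; rewrite -(subnKC le_qm) bump_sum_block ip_bump_block normcR ltcR.
rewrite ger0_norm; last first.
  by apply: sumr_ge0 => i _; rewrite mulr_ge0 ?(sqnorm_ge0 HH) ?exprn_ge0 ?bump_ge0.
apply: le_lt_trans N_small; apply: le_trans (ler_sum _ (fun i _ => bump_sq_le _ s)) _.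
rewrite -mulr_sumr; apply: le_trans (ler_wpM2l _ (geometric_quarter_le _ _ _)) _ => //.
rewrite mulrA; apply: ler_pM; [lra | by rewrite exprn_ge0 // invr_ge0 | lra |].
by rewrite ler_wiXn2l // ?invr_ge0 // invf_le1 // ler1n.
Qed.

Lemma ip_bump_sum m q : (m < q)%N -> ip (bump_sum q) (w_ m) (t_ m) = (2^-1 ^+ m)%:C%C.
Proof.
move=> mq; rewrite /bump_sum (ip_suml HH) (bigD1 (Ordinal mq)) //= big1 ?addr0 => [|j jm].
  by rewrite (ip_actl HH _ _ _ (bump_cont m)) w_unit mulr1 bump_at.
have /eqP : bump j (t_ m) * bump m (t_ m) = 0 by exact: bump_disjoint.
rewrite bump_at mulf_eq0 expf_eq0 invr_eq0 pnatr_eq0 andbF orbF => /eqP bj0.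
by rewrite (ip_actl HH _ _ _ (bump_cont j)) bj0 mul0r.
Qed.

Lemma norm_ip_gen_le k m : `|ip (g k) (w_ m) (t_ m)| <= (4^-1 ^+ m)%:C%C.
Proof.
have -> : ip (g k) (w_ m) (t_ m) = ip (gen_residual k) (w_ m) (t_ m).
  by rewrite (ip_conj HH) ip_gen_residual // -(ip_conj HH).
rewrite -(ler_pXn2r (_ : 0 < 2)%N) ?nnegrE ?normr_ge0 ?ler0c ?exprn_ge0 ?invr_ge0 //.
apply: le_trans (ip_cauchy_schwarz HH _ _ _) _; rewrite w_unit mulr1 -(sqnormE HH) -rmorphXn lecR.
apply: le_trans (sqnorm_gen_residual_le k (t_ m)) _; apply: le_trans (defect_seq_le m) _.
by rewrite -exprM mulnC exprM (_ : 4^-1 ^+ 2 = 16^-1) // exprVn -natrX.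
Qed.

Lemma ip_lim_bump_sum l :
    (forall eps : C, 0 < eps -> exists N, forall q, (N <= q)%N ->
       forall s, `|ip (bump_sum q - l) (bump_sum q - l) s| < eps) ->
  forall m, ip l (w_ m) (t_ m) = (2^-1 ^+ m)%:C%C.
Proof.
move=> l_lim m; apply/eqP; rewrite -subr_eq0; apply: contraT => gap_neq0.
have [|N close] := l_lim (`|ip l (w_ m) (t_ m) - (2^-1 ^+ m)%:C%C| ^+ 2).
  by apply: exprn_gt0; rewrite normr_gt0.
pose q := maxn N m.+1; have := close q (leq_maxl _ _) (t_ m).
have -> : ip l (w_ m) (t_ m) - (2^-1 ^+ m)%:C%C = - ip (bump_sum q - l) (w_ m) (t_ m).
  by rewrite (ipBl HH) ip_bump_sum ?leq_maxr // opprB.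
have := ip_cauchy_schwarz HH (bump_sum q - l) (w_ m) (t_ m); rewrite w_unit mulr1 normrN.
move=> /le_trans/(_ (real_ler_norm (ger0_real (ip_ge0 HH _ _)))) cs /(le_lt_trans cs).
by rewrite ltxx.
Qed.

Lemma bad_sequence_absurd : False.
Proof.
have [l l_lim] := hm_complete HH bump_sum_cauchy.
have [a [a_cont l_eq]] := g_span l.
have /choice [B B_bd] : forall k, exists B : R, forall t, `|a k t| <= B%:C%C.
  by move=> k; have [Bk ?] := cont_bounded X_compact (a_cont k); exists Bk.
have l_small m : `|ip l (w_ m) (t_ m)| <= ((\sum_(k < n) B k) * 4^-1 ^+ m)%:C%C.
  rewrite l_eq (ip_suml HH) mulr_suml rmorph_sum /=; apply: le_trans (ler_norm_sum _ _ _) _.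
  apply: ler_sum => k _; rewrite (ip_actl HH _ _ _ (a_cont k)) normrM rmorphM /=.
  exact: ler_pM (normr_ge0 _) (normr_ge0 _) (B_bd k _) (norm_ip_gen_le k m).
pose M := Num.Def.archi_bound (\sum_(k < n) B k).
have B_ge0 : 0 <= \sum_(k < n) B k.
  by apply: sumr_ge0 => k _; rewrite -lecR (le_trans (normr_ge0 _) (B_bd k t0)).
have := l_small M; rewrite (ip_lim_bump_sum l_lim) normcR lecR ger0_norm ?exprn_ge0 ?invr_ge0 //.
rewrite (_ : 4^-1 = 2^-1 * 2^-1 :> R); last by rewrite -invfM -natrM.
rewrite exprMn mulrA -[X in X <= _]mul1r ler_pM2r ?exprn_gt0 ?invr_gt0 //.
rewrite exprVn ler_pdivlMr ?exprn_gt0 // mul1r.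
by apply/negP; rewrite -ltNge (lt_trans (archi_boundP B_ge0)) // -natrX ltr_nat ltn_expl.
Qed.

End BadSequence.

Lemma total_of_small_defect :
  exists2 eps : R, 0 < eps & forall t, defect t < eps -> total_at ip t r e.
Proof.
apply: contrapT => no_eps.
have bad eps : 0 < eps -> exists2 tw : X * H,
    orthogonal_at ip tw.1 r e tw.2 /\ ip tw.2 tw.2 tw.1 = 1 & 0 < defect tw.1 < eps.
  move=> eps0; apply: contrapT => no_tw; apply: no_eps; exists eps => // t lt_eps w ow.
  apply: contrapT => /eqP w_neq0; apply: no_tw; exists (t, normalize act ip t w) => /=.
    by split; [exact: (orthogonal_normalize HH) | exact: (ip_normalize HH)].
  rewrite lt_eps andbT lt0r defect_ge0 andbT; apply: contra w_neq0 => /eqP d0.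
  by apply/eqP/total_of_defect0.
have q0 : (0 : R) < 16^-1 by rewrite invr_gt0.
have [tw [tw_ok tw_lt1 tw_fast]] := fast_decreasing_seq q0 bad.
apply: (bad_sequence_absurd (w_ := fun m => (tw m).2) _ tw_lt1 tw_fast) => m;
  by have [[]] := tw_ok m.
Qed.

Lemma total_near : \forall t \near t0, total_at ip t r e.
Proof.
have [eps eps0 small_total] := total_of_small_defect.
have : defect @ t0 --> defect t0 by exact: defect_continuous.
move=> /cvgrPdist_lt/(_ _ eps0); apply: filterS => t.
by rewrite defect_t0 sub0r normrN ger0_norm ?defect_ge0 //; exact: small_total.
Qed.

End UpperSemicontinuity.

(** * The fiber dimension is locally constant *)

Section FiberDimension.
Variables (R : realType) (X : topologicalType).
Local Notation C := (R[i]).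
Variables (H : zmodType) (act : (X -> C) -> H -> H) (ip : H -> H -> X -> C).
Hypothesis HH : hilbert_CX_module act ip.
Hypothesis X_compact : compact [set: X].
Variables (n : nat) (g : 'I_n -> H).
Hypothesis g_span : forall x, exists a : 'I_n -> X -> C,
  (forall i, cont (a i)) /\ x = \sum_(i < n) act (a i) (g i).
Variable D : X -> nat.
Hypothesis D_onb : forall t, exists u, orthonormal_at ip t (D t) u /\ total_at ip t (D t) u.

Lemma fiber_dim_le_near x : \forall t \near x, (D t <= D x)%N.
Proof.
have [u [u_on u_tot]] := D_onb x.
apply: filterS (total_near HH X_compact g_span u_on u_tot) => t tot.
by have [v [v_on _]] := D_onb t; exact: (orthonormal_size_le HH v_on tot).
Qed.

Variable y : nat -> H.
Hypothesis y_frame : std_nt_frame ip y.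

Lemma fiber_dim_ge_near x : \forall t \near x, (D x <= D t)%N.
Proof.
have [u [u_on u_tot]] := D_onb x; have half : (0 : R) < 2^-1 by rewrite invr_gt0.
have [N close] := frame_sum_cvg HH y_frame u_on u_tot half.
have : frame_sum ip y N @ x --> frame_sum ip y N x by exact: (frame_sum_continuous HH).
move=> /cvgrPdist_lt/(_ _ half); apply: filterS => t near_x.
have [v [v_on v_tot]] := D_onb t; have := frame_sum_le HH y_frame v_on v_tot N.
have := close N (leqnn N); rewrite -ltnS -(ltr_nat R) -[(D t).+1%:R]natr1.
by move: near_x; rewrite !ltr_norml => /andP[? ?] /andP[? ?] ?; lra.
Qed.

Lemma fiber_dim_locally_constant x : \forall t \near x, D t = D x.
Proof.
apply: filterS2 (fiber_dim_le_near x) (fiber_dim_ge_near x) => t le_tx le_xt.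
by apply/eqP; rewrite eqn_leq le_tx.
Qed.

Lemma frame_sum_uniform_cvg (e : R) : 0 < e -> exists N, forall m, (N <= m)%N ->
  forall t, `|\sum_(j < m) ip (y j) (y j) t - (D t)%:R| <= e%:C%C.
Proof.
have D_le m t : frame_sum ip y m t <= (D t)%:R.
  by have [u [u_on u_tot]] := D_onb t; exact: (frame_sum_le HH y_frame u_on u_tot m).
move=> e0; have [N close] : exists N, forall m, (N <= m)%N ->
    forall t, (D t)%:R - frame_sum ip y m t < e.
  apply: (dini_uniform X_compact (s := frame_sum ip y) (f := fun t => (D t)%:R)) => //.
  - exact: (frame_sum_continuous HH).
  - move=> x; apply: near_cst_continuous.
    by apply: filterS (fiber_dim_locally_constant x) => t ->.
  - by move=> m m' t; apply: (frame_sum_nondecreasing HH).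
  - move=> t e' e'0; have [u [u_on u_tot]] := D_onb t.
    have [N close] := frame_sum_cvg HH y_frame u_on u_tot e'0.
    by exists N; apply: le_lt_trans (ler_norm _) (close N (leqnn N)).
exists N => m Nm t; rewrite -(frame_sumE HH) -(rmorph_nat (real_complex R)) -rmorphB /=.
by rewrite normcR lecR distrC ger0_norm ?subr_ge0 ?D_le //; exact/ltW/close.
Qed.

End FiberDimension.

Unset Implicit Arguments. Set Strict Implicit.

Theorem proposition4p7 (R : realType) (X : topologicalType)
    (X_compact : compact [set: X]) (X_hausdorff : hausdorff_space X)
    (H : zmodType) (act : (X -> R[i]) -> H -> H) (ip : H -> H -> X -> R[i])
    (HH : hilbert_CX_module act ip) (Hfg : fin_generated act) :
  exists f : X -> R[i],
    [/\ cont f,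
        (forall t, exists n : nat, f t = n%:R),
        (forall n : nat, open [set t | f t = n%:R] /\ closed [set t | f t = n%:R])
      & forall y : nat -> H, std_nt_frame ip y ->
          weak_sum_to (fun j => ip (y j) (y j)) f].
Proof.
have [n [g g_span]] := Hfg.
have /choice [D D_onb] := exists_fiber_onb HH g_span.
case: (pselect (exists y, std_nt_frame ip y)) => [[y0 y0_frame]|no_frame]; last first.
  (* Without a standard frame the last clause is vacuous. *)
  exists (fun _ => 0); split=> [|t|k|y y_frame]; last by case: no_frame; exists y.
  - exact: cont_cst.
  - by exists 0%N.
  - by split; [apply: open_level_set | apply: closed_level_set] => x; apply: nearW.
have D_lc x : \forall t \near x, ((D t)%:R : R[i]) = (D x)%:R.
  by apply: filterS (fiber_dim_locally_constant HH X_compact g_span D_onb y0_frame x) => t ->.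
exists (fun t => (D t)%:R); split=> [|t|k|y y_frame].
- exact: cont_near_cst.
- by exists (D t).
- by split; [apply: open_level_set | apply: closed_level_set].
- apply: weak_sum_of_uniform => [j||].
  + exact/(hm_ip_cont HH).
  + exact: cont_near_cst.
  + exact: (frame_sum_uniform_cvg HH X_compact g_span D_onb y_frame).
Qed.
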